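(* Let $T$ be a DAT with duration vector $d$, and let $v$ be a module of $T$. Let $T^v$ be the DAT obtained from $T$ by deleting all nodes of $T_v$ other than $v$ (together with their incident edges) and turning $v$ into a new leaf $\tilde v$ of type $\mathtt{BAS}$ (keeping its incoming edges and its position in the child orderings of its $\mathtt{SAND}$-parents). Define the duration vector $d^v$ on the BASes of $T^v$ by $d^v_a=d_a$ for $a\in N_{\mathtt{BAS}}\setminus B_v$ and $d^v_{\tilde v}=\mathrm{mt}(T_v,d|_{B_v})$ (where, if this value is $\infty$, one uses the convention that $\mathrm{t}(\mathcal{O},d^v)=\infty$ for any attack $\mathcal{O}$ containing $\tilde v$). Then $$\mathrm{mt}(T,d)=\mathrm{mt}(T^v,d^v).$$
   Context: A dynamic attack tree (DAT) is a finite rooted directed acyclic graph $T=(N,E)$ (edges point from a node to its children) with root $\mathrm{R}_T$, in which each node $v$ has a type $\gamma(v)\in\{\mathtt{BAS},\mathtt{OR},\mathtt{AND},\mathtt{SAND}\}$, with $\gamma(v)=\mathtt{BAS}$ if and only if $v$ is a leaf. Every node of type $\mathtt{SAND}$ comes with a fixed linear ordering $v_1,\dots,v_n$ of its children, written $v=\mathtt{SAND}(v_1,\dots,v_n)$; similarly one writes $v=\mathtt{OR}(v_1,\dots,v_n)$, $v=\mathtt{AND}(v_1,\dots,v_n)$. $N_\gamma$ denotes the set of nodes of type $\gamma$. For a node $v$, $T_v$ is the sub-DAG induced on the descendants of $v$ (all nodes reachable from $v$ by a directed path, including $v$), rooted at $v$, with the inherited types and orderings, and $B_v$ is the set of nodes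 of $T_v$ of type $\mathtt{BAS}$. A module of $T$ is a node $v\in N\setminus N_{\mathtt{BAS}}$ such that every directed path from a node outside $T_v$ to a node of $T_v$ passes through $v$; equivalently, every node of $T_v$ other than $v$ has all its parents inside $T_v$. An attack on $T$ is a pair $\mathcal{O}=(A,\prec)$ where $A\subseteq N_{\mathtt{BAS}}$ and $\prec$ is a strict partial order on $A$. An attack $(A,\prec)$ reaches a node $v$, defined recursively: if $v\in N_{\mathtt{BAS}}$, iff $v\in A$; if $v=\mathtt{OR}(v_1,\dots,v_n)$, iff it reaches some $v_i$; if $v=\mathtt{AND}(v_1,\dots,v_n)$, iff it reaches all $v_i$; if $v=\mathtt{SAND}(v_1,\dots,v_n)$, iff it reaches all $v_i$ and for every $i<n$, every $a\in A\cap B_{v_i}$ and every $a'\in A\cap B_{v_{i+1}}$ one has $a\prec a'$. An attack is successful if it reaches $\mathrm{R}_T$; $\mathcal{S}_T$ is the set of successful attacks. A duration vector is $d\in\mathbb{R}_{\ge0}^{N_{\mathtt{BAS}}}$. For an attack $\mathcal{O}=(A,\prec)$, $\mathrm{t}(\mathcal{O},d)=\max_C\sum_{a\in C}d_a$, the maximum over all maximal chains $C$ of $(A,\prec)$ (equal to $0$ if $A=\varnothing$). The min time is $\mathrm{mt}(T,d)=\min_{\mathcal{O}\in\mathcal{S}_T}\mathrm{t}(\mathcal{O},d)$, which is $\infty$ if $\mathcal{S}_T=\varnothing$. *)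

From HB Require Import structures.
From mathcomp Require Import all_boot all_order all_algebra.
From mathcomp Require Import reals constructive_ereal.
Set Implicit Arguments. Unset Strict Implicit. Unset Printing Implicit Defensive.
Import Order.TTheory GRing.Theory Num.Theory.

Inductive gate := BAS | OR | AND | SAND.
Definition is_bas (g : gate) : bool := if g is BAS then true else false.

(* A DAT over a finite type of nodes N: the children of a node are given as a
   sequence (for SAND nodes this is the fixed ordering v_1,...,v_n). *)
Record dat (N : finType) := Dat { ch : N -> seq N; typ : N -> gate; root : N }.

Section DAT.
Variable N : finType.
Variable T : dat N.

Definition edge : rel N := fun x y => y \in ch T x.
Definition desc (x y : N) : bool := connect edge x y.

Definition wf_dat : Prop :=
  [/\ (forall x y, edge x y -> ~~ desc y x),
      (forall x, desc (root T) x),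
      (forall x, uniq (ch T x))
    & (forall x, is_bas (typ T x) = (ch T x == [::]))].

Definition Bset (w : N) : {set N} := [set x | desc w x & is_bas (typ T x)].

(* An attack (A, prec), with prec encoded as a set of pairs. *)
Definition attack := ({set N} * {set N * N})%type.

Definition is_attack (O : attack) : bool :=
  [&& O.1 \subset [set x | is_bas (typ T x)],
      [forall p in O.2, (p.1 \in O.1) && (p.2 \in O.1)],
      [forall a, (a, a) \notin O.2] &
      [forall a, forall b, forall c,
         ((a, b) \in O.2) && ((b, c) \in O.2) ==> ((a, c) \in O.2)]].

Definition sand_rel (O : attack) (x y : N) : bool :=
  [forall a, forall a',
     [&& a \in O.1, a \in Bset x, a' \in O.1 & a' \in Bset y] ==> ((a, a') \in O.2)].

(* reaching, by recursion with fuel; fuel #|N| is enough in a DAG *)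
Fixpoint reachf (O : attack) (k : nat) (v : N) : bool :=
  match k with
  | 0 => false
  | k'.+1 =>
    match typ T v with
    | BAS => v \in O.1
    | OR => has (reachf O k') (ch T v)
    | AND => all (reachf O k') (ch T v)
    | SAND => all (reachf O k') (ch T v) && sorted (sand_rel O) (ch T v)
    end
  end.

Definition reaches (O : attack) (v : N) : bool := reachf O #|N| v.

Definition successful (O : attack) : bool := is_attack O && reaches O (root T).

Definition is_chain (O : attack) (C : {set N}) : bool :=
  (C \subset O.1) &&
  [forall a in C, forall b in C, (a != b) ==> (((a, b) \in O.2) || ((b, a) \in O.2))].

Definition is_maxchain (O : attack) (C : {set N}) : bool :=
  is_chain O C && [forall C' : {set N}, is_chain O C' ==> ~~ (C \proper C')].

Local Open Scope ereal_scope.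
Variable R : realType.

(* durations may be +oo (needed for d^v); t(O,d) = max over maximal chains *)
Definition attack_time (O : attack) (d : N -> \bar R) : \bar R :=
  \big[Order.max/-oo]_(C : {set N} | is_maxchain O C) (\sum_(a in C) d a).

Definition min_time (d : N -> \bar R) : \bar R :=
  \big[Order.min/+oo]_(O : attack | successful O) attack_time O d.

Definition is_module (v : N) : Prop :=
  ~~ is_bas (typ T v) /\
  (forall x p, desc v x -> x != v -> edge p x -> desc v p).

End DAT.

Section Constructions.
Variable N : finType.
Variable T : dat N.
Variable v : N.

Definition subN := {x : N | desc T v x}.
Definition sub_root : subN := exist _ v (connect0 _ v).
Definition subdat : dat subN :=
  Dat (fun x : subN => pmap insub (ch T (val x)))
      (fun x : subN => typ T (val x)) sub_root.

Definition keep (x : N) : bool := (x == v) || ~~ desc T v x.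
Definition quotN := {x : N | keep x}.
Lemma keep_v : keep v. Proof. by rewrite /keep eqxx. Qed.
Definition vtilde : quotN := exist _ v keep_v.
Definition quotdat : dat quotN :=
  Dat (fun x : quotN => if val x == v then [::] else pmap insub (ch T (val x)))
      (fun x : quotN => if val x == v then BAS else typ T (val x))
      (insubd vtilde (root T)).

Variable R : realType.
Local Open Scope ereal_scope.
Definition quotdur (d : N -> R) : quotN -> \bar R :=
  fun x => if val x == v then min_time (subdat) (fun y : subN => (d (val y))%:E)
           else (d (val x))%:E.
End Constructions.

Arguments subdat {N} T v.
Arguments quotdat {N} T v.
Arguments quotdur {N} T v {R} d _.

From Pilot Require Import Defs.
From HB Require Import structures.
From mathcomp Require Import all_boot all_order all_algebra.
From mathcomp Require Import reals constructive_ereal.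
Set Implicit Arguments. Unset Strict Implicit. Unset Printing Implicit Defensive.
Import Order.TTheory GRing.Theory Num.Theory.

(* Because v is a module, every path from outside T_v into T_v enters through v.
   Hence an attack O on T splits into its trace on B_v and the rest.  Collapsing
   the trace to the single BAS ṽ (attacked iff O reaches v, and ordered like all
   attacked BASes below v) gives an attack on T^v that reaches the root; each of
   its chains lifts to a chain of O in which ṽ is replaced by a chain of the
   trace, which weighs at least mt(T_v).  Conversely, an attack on T^v is expanded
   by substituting an optimal attack on T_v for ṽ, and each chain of the
   expansion projects to a chain of the original attack in which the part inside
   T_v weighs at most mt(T_v).  With nonnegative durations every chain extends to
   a maximal chain of no smaller weight, so both constructions do not increase the
   attack time. *)

Lemma homo_connect (T1 T2 : finType) (e1 : rel T1) (e2 : rel T2) (f : T1 -> T2) :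
  {homo f : x y / e1 x y >-> e2 x y} ->
  {homo f : x y / connect e1 x y >-> connect e2 x y}.
Proof.
move=> fe x _ /connectP[p + ->]; elim: p x => [|y p IH] x /=; first by rewrite connect0.
by case/andP=> /fe exy /IH; apply: connect_trans (connect1 exy).
Qed.

Lemma map_val_pmap_insub (X : Type) (P : pred X) (sT : subType P) (s : seq X) :
  map val (pmap (insub : X -> option sT) s) = filter P s.
Proof.
elim: s => [|x s IH] //=; case: insubP => [u Px vu|/negbTE nPx] /=.
  by rewrite Px vu IH.
by rewrite nPx.
Qed.

Section Reach.
Variables (N : finType) (T : dat N).

Definition reach_step (f : N -> bool) (O : attack N) (u : N) : bool :=
  match typ T u with
  | BAS => u \in O.1
  | OR => has f (ch T u)
  | AND => all f (ch T u)
  | SAND => all f (ch T u) && sorted (sand_rel T O) (ch T u)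
  end.

Lemma desc_refl x : desc T x x.
Proof. exact: connect0. Qed.

Lemma reachfS O k u : reachf T O k.+1 u = reach_step (reachf T O k) O u.
Proof. by []. Qed.

Lemma reach_step_mono (f g : N -> bool) O u :
  (forall c, c \in ch T u -> f c -> g c) -> reach_step f O u -> reach_step g O u.
Proof.
move=> fg; rewrite /reach_step; case: (typ T u) => //.
- by case/hasP=> c cu fc; apply/hasP; exists c => //; apply: fg.
- by move/allP=> fu; apply/allP=> c cu; apply: fg (fu c cu).
- by case/andP=> /allP fu ->; rewrite andbT; apply/allP=> c cu; apply: fg (fu c cu).
Qed.

Lemma reachf_succ O k u : reachf T O k u -> reachf T O k.+1 u.
Proof.
elim: k u => // k IH u.
by rewrite reachfS [reachf _ _ k.+2 _]reachfS; apply: reach_step_mono => c _ /IH.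
Qed.

Lemma reachf_le O j k u : j <= k -> reachf T O j u -> reachf T O k u.
Proof.
move/subnKC <-; elim: (k - j) => [|i IH]; first by rewrite addn0.
by rewrite addnS => /IH /reachf_succ.
Qed.

Lemma Bset_desc_sub x y : desc T x y -> Bset T y \subset Bset T x.
Proof.
move=> dxy; apply/subsetP=> a; rewrite !inE => /andP[dya ->].
by rewrite andbT; apply: connect_trans dxy dya.
Qed.

Lemma reachf_attacked_bas O k u :
  (forall x, is_bas (typ T x) = (ch T x == [::])) ->
  reachf T O k u -> exists2 a, a \in O.1 & a \in Bset T u.
Proof.
move=> leaf; elim: k u => // k IH u; rewrite reachfS /reach_step.
have from_child c : c \in ch T u -> reachf T O k c ->
    exists2 a, a \in O.1 & a \in Bset T u.
  move=> cu /IH[a aO aB]; exists a => //.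
  exact: subsetP (Bset_desc_sub (connect1 cu)) _ aB.
have from_first : ~~ is_bas (typ T u) -> all (reachf T O k) (ch T u) ->
    exists2 a, a \in O.1 & a \in Bset T u.
  rewrite leaf; case: (ch T u) from_child => //= c s fc _ /andP[rc _].
  exact: fc (mem_head c s) rc.
case E: (typ T u).
- by move=> uO; exists u; rewrite // inE desc_refl E.
- by case/hasP=> c; apply: from_child.
- by apply: from_first; rewrite E.
- by case/andP=> + _; apply: from_first; rewrite E.
Qed.

Section Acyclic.
Hypothesis acyclic : forall x y, edge T x y -> ~~ desc T y x.

Lemma desc_anti x y : desc T x y -> desc T y x -> x = y.
Proof.
case/connectP=> [[|z p] //= /andP[exz zp] ->] dyx.
have dzy : desc T z (last z p) by apply/connectP; exists p.
by move: (acyclic exz); rewrite /desc (connect_trans dzy dyx).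
Qed.

Definition ndesc u := #|[set x | desc T u x]|.

Lemma ndesc_edge u c : edge T u c -> ndesc c < ndesc u.
Proof.
move=> euc; apply/proper_card/properP; split.
  by apply/subsetP=> x; rewrite !inE; apply: connect_trans (connect1 euc).
by exists u; rewrite inE ?acyclic ?desc_refl.
Qed.

Lemma reachf_ndesc O k u : ndesc u <= k -> reachf T O k.+1 u = reachf T O k u.
Proof.
elim: k u => [|k IH] u.
  by rewrite leqn0 /ndesc cards_eq0 => /eqP/setP/(_ u); rewrite !inE desc_refl.
move=> uk; rewrite reachfS [reachf _ _ k.+1 _]reachfS.
have eq_ch : {in ch T u, reachf T O k.+1 =1 reachf T O k}.
  by move=> c cu; apply/IH; rewrite -ltnS (leq_trans (ndesc_edge cu)).
by apply/idP/idP; apply: reach_step_mono => c cu; rewrite eq_ch.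
Qed.

Lemma reachf_fuel O k u : #|N| <= k -> reachf T O k u = reaches T O u.
Proof.
have stable j : reachf T O (ndesc u + j) u = reachf T O (ndesc u) u.
  by elim: j => [|j IH]; rewrite ?addn0 // addnS reachf_ndesc ?leq_addr.
move=> Nk; have uN : ndesc u <= #|N| by apply: max_card.
by rewrite -(subnKC (leq_trans uN Nk)) /reaches -(subnKC uN) !stable.
Qed.

Lemma reachesE O u : reaches T O u = reach_step (reaches T O) O u.
Proof. by rewrite -(reachf_fuel _ _ (leqnSn _)). Qed.

Lemma reachf_reaches O k u : reachf T O k u -> reaches T O u.
Proof. by move/(reachf_le (leq_addr #|N| k)); rewrite reachf_fuel ?leq_addl. Qed.

End Acyclic.
End Reach.

Section Attack.
Variables (N : finType) (T : dat N) (O : attack N).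
Hypothesis HO : is_attack T O.

Lemma attacked_bas a : a \in O.1 -> is_bas (typ T a).
Proof. by case/and4P: HO => /subsetP sub _ _ _ /sub; rewrite inE. Qed.

Lemma prec_attacked a b : (a, b) \in O.2 -> (a \in O.1) && (b \in O.1).
Proof. by case/and4P: HO => _ /forallP /(_ (a, b)) /implyP. Qed.

Lemma prec_irrefl a : (a, a) \notin O.2.
Proof. by case/and4P: HO => _ _ /forallP. Qed.

Lemma prec_trans a b c : (a, b) \in O.2 -> (b, c) \in O.2 -> (a, c) \in O.2.
Proof.
case/and4P: HO => _ _ _ /forallP /(_ a) /forallP /(_ b) /forallP /(_ c) /implyP abc ab bc.
by apply: abc; rewrite ab bc.
Qed.

End Attack.

Lemma is_attack0 (N : finType) (T : dat N) : is_attack T (set0, set0).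
Proof.
apply/and4P; split; first exact: sub0set.
- by apply/forallP=> p; rewrite inE.
- by apply/forallP=> a; rewrite inE.
- by do 3!apply/forallP=> ?; rewrite inE.
Qed.

Lemma is_chainP (N : finType) (O : attack N) (C : {set N}) :
  reflect ({subset C <= O.1} /\
           {in C &, forall a b, a != b -> ((a, b) \in O.2) || ((b, a) \in O.2)})
          (is_chain O C).
Proof.
apply: (iffP andP) => [[/subsetP CO /forallP cmp]|[/subsetP CO cmp]].
  split=> // a b aC bC; move: (cmp a); rewrite aC => /forallP /(_ b).
  by rewrite bC /= => /implyP.
split=> //; apply/forallP=> a; apply/implyP=> aC; apply/forallP=> b.
by apply/implyP=> bC; apply/implyP; apply: cmp.
Qed.

Lemma chain0 (N : finType) (O : attack N) : is_chain O set0.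
Proof. by apply/is_chainP; split=> [a|a b]; rewrite inE. Qed.

Lemma chain1 (N : finType) (O : attack N) a : a \in O.1 -> is_chain O [set a].
Proof.
move=> aO; apply/is_chainP; split=> [b|b c]; first by rewrite inE => /eqP ->.
by rewrite !inE => /eqP -> /eqP ->; rewrite eqxx.
Qed.

Section Time.
Variables (N : finType) (R : realType).
Local Open Scope ereal_scope.
Variables (O : attack N) (d : N -> \bar R).
Hypothesis d_ge0 : forall a, a \in O.1 -> 0 <= d a.

Lemma chain_le_attack_time C : is_chain O C -> \sum_(a in C) d a <= attack_time O d.
Proof.
move=> chC; have [|C' /andP[chC' CC'] maxC'] := @arg_maxnP _ C
  (fun C' => is_chain O C' && (C \subset C')) (fun C' => #|C'|); first by rewrite chC subxx.
have mC' : is_maxchain O C'.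
  rewrite /is_maxchain chC'; apply/forallP=> C2; apply/implyP=> chC2; apply/negP=> C'C2.
  move: (proper_card C'C2); rewrite ltnNge => /negP; apply; apply: maxC'.
  by rewrite chC2 (subset_trans CC' (proper_sub C'C2)).
apply: le_trans (le_bigmax_cond _ _ mC').
apply: lee_sum_nneg_subset => [|a]; first exact/subsetP.
by rewrite !inE => /andP[_ aC']; apply/d_ge0; case/is_chainP: chC' => /(_ a aC').
Qed.

Lemma attack_time_ge0 : 0 <= attack_time O d.
Proof. by have := chain_le_attack_time (chain0 O); rewrite big_set0. Qed.

Lemma attack_time_attained :
  exists2 C, is_maxchain O C & attack_time O d = \sum_(a in C) d a.
Proof.
pose P x := x = -oo \/ exists2 C, is_maxchain O C & x = \sum_(a in C) d a.
have : P (attack_time O d).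
  apply: big_ind => [|x y Px Py|C mC]; [by left | | by right; exists C].
  by rewrite maxEle; case: ifP.
by case=> // tO; move: attack_time_ge0; rewrite tO.
Qed.

End Time.

Lemma attack_time_le (N : finType) (R : realType) (O : attack N) (d : N -> \bar R) t :
  (forall C, is_maxchain O C -> \sum_(a in C) d a <= t)%E -> (attack_time O d <= t)%E.
Proof. by move=> le_t; apply/bigmax_leP; split=> //; apply: leNye. Qed.

Section MinTime.
Variables (N : finType) (T : dat N) (R : realType).
Local Open Scope ereal_scope.
Variable d : N -> \bar R.

Lemma min_time_le O : successful T O -> min_time T d <= attack_time O d.
Proof. exact: (bigmin_le_cond _ (fun O => attack_time O d)). Qed.

Lemma le_min_time t :
  (forall O, successful T O -> t <= attack_time O d) -> t <= min_time T d.
Proof. by move=> le_t; apply/bigmin_geP; split=> //; apply: leey. Qed.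

Lemma min_time_attained : min_time T d != +oo ->
  exists2 O, successful T O & min_time T d = attack_time O d.
Proof.
pose P x := x = +oo \/ exists2 O, successful T O & x = attack_time O d.
have : P (min_time T d).
  apply: big_ind => [|x y Px Py|O sO]; [by left | | by right; exists O].
  by rewrite minEle; case: ifP.
by case=> [->|//]; rewrite eqxx.
Qed.

Lemma min_time_ge0 : (forall a, is_bas (typ T a) -> 0 <= d a) -> 0 <= min_time T d.
Proof.
move=> d_ge0; apply: le_min_time => O /andP[HO _].
by apply: attack_time_ge0 => a /(attacked_bas HO); apply: d_ge0.
Qed.

End MinTime.

Section WellFormed.
Variables (N : finType) (T : dat N).
Hypothesis wfT : wf_dat T.

Lemma wf_acyclic x y : edge T x y -> ~~ desc T y x.
Proof. by case: wfT => + _ _ _; apply. Qed.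

Lemma wf_rooted x : desc T (Defs.root T) x.
Proof. by case: wfT => _ + _ _; apply. Qed.

Lemma wf_leaf x : is_bas (typ T x) = (ch T x == [::]).
Proof. by case: wfT => _ _ _; apply. Qed.

End WellFormed.

Section Module.
Variables (N : finType) (T : dat N) (v : N).
Hypotheses (wfT : wf_dat T) (modv : is_module T v).

Local Notation Tv := (subdat T v).
Local Notation Tq := (quotdat T v).
Local Notation sN := (subN T v).
Local Notation qN := (quotN T v).
Local Notation vt := (vtilde T v).

Let acyclicT := wf_acyclic wfT.

Lemma module_parent x p : desc T v x -> x != v -> edge T p x -> desc T v p.
Proof. by case: modv => _; apply. Qed.

Lemma keep_desc x : keep T v x -> desc T v x -> x = v.
Proof. by rewrite /keep => /orP[/eqP //|/negbTE ->]. Qed.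

Lemma kept_ndesc (x : qN) : val x != v -> ~~ desc T v (val x).
Proof. by move=> xv; have := valP x; rewrite /keep (negbTE xv). Qed.

Lemma keep_child x c : keep T v x -> x != v -> edge T x c -> keep T v c.
Proof.
move=> kx xv exc; rewrite /keep; case: eqVneq => //= cv; apply/negP=> dvc.
by move: xv; rewrite (keep_desc kx (module_parent dvc cv exc)) eqxx.
Qed.

Lemma desc_module_entry x a : keep T v x -> desc T x a -> desc T v a -> desc T x v.
Proof.
move=> + /connectP[p xp ->]; elim: p x xp => [|z p IH] x /= xp kx dvL.
  by rewrite (keep_desc kx dvL) desc_refl.
case/andP: xp => exz zp; have [->|xv] := eqVneq x v; first exact: desc_refl.
exact: connect_trans (connect1 exz) (IH z zp (keep_child kx xv exz) dvL).
Qed.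

Lemma ch_quot (u : qN) : val u != v -> map val (ch Tq u) = ch T (val u).
Proof.
move=> uv; rewrite /= (negbTE uv) map_val_pmap_insub.
by apply/all_filterP/allP=> c; apply: keep_child (valP u) uv.
Qed.

Lemma typ_quot (u : qN) : val u != v -> typ Tq u = typ T (val u).
Proof. by move=> uv; rewrite /= (negbTE uv). Qed.

Lemma is_bas_quot (x : qN) :
  is_bas (typ Tq x) = (val x == v) || is_bas (typ T (val x)).
Proof. by rewrite /=; case: eqP. Qed.

Lemma edge_quotE (x y : qN) : edge Tq x y = (val x != v) && edge T (val x) (val y).
Proof. by rewrite /edge /=; case: eqP => //= _; apply: mem_pmap_sub. Qed.

Lemma path_from_module p : path (edge T) v p -> keep T v (last v p) -> p = [::].
Proof.
case: p => [|w p] //= /andP[evw wp] kL.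
have dwL : desc T w (last w p) by apply/connectP; exists p.
have Lv : last w p = v by apply: keep_desc kL (connect_trans (connect1 evw) dwL).
by move: (acyclicT evw); rewrite -Lv dwL.
Qed.

Lemma desc_quot_path p (x : qN) : path (edge T) (val x) p ->
  keep T v (last (val x) p) -> desc Tq x (insubd x (last (val x) p)).
Proof.
elim: p x => [|z p IH] x xp kL; first by rewrite valKd desc_refl.
have [xv|xv] := eqVneq (val x) v.
  by rewrite xv in xp kL; have := path_from_module xp kL.
case/andP: xp => exz zp; pose z' : qN := Sub z (keep_child (valP x) xv exz).
have exz' : edge Tq x z' by rewrite edge_quotE xv.
have -> : insubd x (last z p) = insubd z' (last z p) by apply: val_inj; rewrite !insubdK.
exact: connect_trans (connect1 exz') (IH z' zp kL).
Qed.

Lemma desc_quotE (x y : qN) : desc Tq x y = desc T (val x) (val y).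
Proof.
apply/idP/idP => [dxy|/connectP[p xp yL]].
  by apply: (homo_connect _ dxy) => a b; rewrite edge_quotE => /andP[].
by have := desc_quot_path xp; rewrite -yL valKd; apply; apply: valP.
Qed.

Lemma acyclic_quot (x y : qN) : edge Tq x y -> ~~ desc Tq y x.
Proof. by rewrite edge_quotE desc_quotE => /andP[_ /acyclicT]. Qed.

Lemma Bset_quotE (x a : qN) :
  (a \in Bset Tq x) = desc T (val x) (val a) && ((val a == v) || is_bas (typ T (val a))).
Proof. by rewrite inE desc_quotE is_bas_quot. Qed.

Lemma val_root_quot : val (Defs.root Tq) = Defs.root T.
Proof.
rewrite /= insubdK // unfold_in; apply/orP.
have [dvr|] := boolP (desc T v (Defs.root T)); last by right.
by left; rewrite (desc_anti acyclicT (wf_rooted wfT v) dvr).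
Qed.

Lemma edge_subE (x y : sN) : edge Tv x y = edge T (val x) (val y).
Proof. exact: mem_pmap_sub. Qed.

Lemma desc_subE (x y : sN) : desc Tv x y = desc T (val x) (val y).
Proof.
apply/idP/idP => [dxy|/connectP[p]].
  by apply: (homo_connect _ dxy) => a b; rewrite edge_subE.
elim: p x => [|z p IH] x /=; first by move=> _ /val_inj ->; apply: desc_refl.
case/andP=> exz zp yL; pose z' : sN := Sub z (connect_trans (valP x) (connect1 exz)).
have exz' : edge Tv x z' by rewrite edge_subE.
exact: connect_trans (connect1 exz') (IH z' zp yL).
Qed.

Lemma acyclic_sub (x y : sN) : edge Tv x y -> ~~ desc Tv y x.
Proof. by rewrite edge_subE desc_subE; apply: acyclicT. Qed.

Lemma Bset_subE (x a : sN) : (a \in Bset Tv x) = (val a \in Bset T (val x)).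
Proof. by rewrite !inE desc_subE. Qed.

Lemma ch_sub (u : sN) : map val (ch Tv u) = ch T (val u).
Proof.
rewrite /= map_val_pmap_insub; apply/all_filterP/allP=> c cu.
exact: connect_trans (valP u) (connect1 cu).
Qed.

Definition quot_of (a : N) : qN := insubd vt a.
Definition sub_of (a : N) : sN := insubd (sub_root T v) a.

Lemma quot_of_desc a : desc T v a -> quot_of a = vt.
Proof.
move=> dva; apply: val_inj; rewrite val_insubd; case: ifP => // ka.
exact: keep_desc ka dva.
Qed.

Lemma val_quot_of a : ~~ desc T v a -> val (quot_of a) = a.
Proof. by move=> dva; rewrite val_insubd /keep dva orbT. Qed.

Lemma val_sub_of a : desc T v a -> val (sub_of a) = a.
Proof. by move=> dva; rewrite val_insubd dva. Qed.

Lemma quot_of_neq a : ~~ desc T v a -> quot_of a != vt.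
Proof.
move=> dva; rewrite -val_eqE val_quot_of //.
by apply: contraNneq dva => ->; apply: desc_refl.
Qed.

Lemma quot_of_eq a b : a != b -> quot_of a = quot_of b -> desc T v a && desc T v b.
Proof.
move=> ab eab.
have [dva|dva] := boolP (desc T v a); have [dvb|dvb] := boolP (desc T v b) => //.
- by move: (quot_of_neq dvb); rewrite -eab quot_of_desc ?eqxx.
- by move: (quot_of_neq dva); rewrite eab quot_of_desc ?eqxx.
- by move: ab; rewrite -(val_quot_of dva) -(val_quot_of dvb) eab eqxx.
Qed.

Lemma setU_module (C : {set N}) :
  C = val @: [set s : sN | val s \in C] :|: val @: (quot_of @: C :\ vt).
Proof.
apply/setP=> a; apply/idP/setUP => [aC|].
  have [dva|dva] := boolP (desc T v a).
    by left; apply/imsetP; exists (Sub a dva); rewrite ?inE.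
  right; apply/imsetP; exists (quot_of a); rewrite ?val_quot_of //.
  by rewrite in_setD1 quot_of_neq // imset_f.
case=> /imsetP[x]; first by rewrite inE => xC ->.
case/setD1P=> xv /imsetP[b bC xb] ->; subst x.
have dvb : ~~ desc T v b by apply: contra xv => /quot_of_desc ->; apply: eqxx.
by rewrite val_quot_of.
Qed.

Lemma big_module_split (M : Type) (idx : M) (op : Monoid.com_law idx) (F : N -> M)
    (D : {set sN}) (E : {set qN}) :
  \big[op/idx]_(a in val @: D :|: val @: (E :\ vt)) F a =
  op (\big[op/idx]_(s in D) F (val s)) (\big[op/idx]_(x in E :\ vt) F (val x)).
Proof.
have disj : [disjoint val @: D & val @: (E :\ vt)].
  rewrite -setI_eq0; apply/eqP/setP=> a; rewrite !inE; apply/negP.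
  case/andP=> /imsetP[s _ ->] /imsetP[x /setD1P[xv _] sx].
  by move: (kept_ndesc xv); rewrite -sx (valP s).
rewrite (eq_bigl [predU val @: D & val @: (E :\ vt)]) => [|a]; last by rewrite !inE.
by rewrite bigU // !big_imset //; apply: in2W; apply: val_inj.
Qed.

Section Trace.
Variables (O : attack N) (P : attack sN).
Hypothesis P_attacked : forall s, (s \in P.1) = (val s \in O.1).
Hypothesis P_prec : forall s t, ((s, t) \in P.2) = ((val s, val t) \in O.2).

Lemma sand_rel_sub x y : sand_rel Tv P x y = sand_rel T O (val x) (val y).
Proof.
apply/forallP/forallP=> [sxy a|sxy s]; apply/forallP=> b; apply/implyP.
  case/and4P=> aO ax bO yb; have := Bset_desc_sub (valP x); have := Bset_desc_sub (valP y).
  move=> /subsetP/(_ b yb); rewrite inE => /andP[dvb _].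
  move=> /subsetP/(_ a ax); rewrite inE => /andP[dva _].
  move: (sxy (Sub a dva)) => /forallP/(_ (Sub b dvb))/implyP; rewrite P_prec; apply.
  by rewrite !P_attacked !Bset_subE /= aO ax bO yb.
case/and4P=> sP sx bP yb; rewrite P_prec.
move: (sxy (val s)) => /forallP/(_ (val b))/implyP; apply.
by rewrite -!P_attacked -!Bset_subE sP sx bP yb.
Qed.

Lemma reachf_sub k s : reachf Tv P k s = reachf T O k (val s).
Proof.
elim: k s => // k IH s; rewrite !reachfS /reach_step -ch_sub.
have -> : typ Tv s = typ T (val s) by [].
case: (typ T (val s)); first exact: P_attacked.
- by rewrite has_map; apply: eq_has.
- by rewrite all_map; apply: eq_all.
- rewrite all_map sorted_map (eq_all IH); congr andb.
  by case: (ch Tv s) => //= c cs; apply: eq_path; apply: sand_rel_sub.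
Qed.

Lemma reaches_sub s : reaches Tv P s = reaches T O (val s).
Proof.
have card_sub : #|{: sN}| <= #|N| by rewrite card_sig max_card.
by rewrite -(reachf_fuel acyclic_sub _ _ card_sub) reachf_sub.
Qed.

End Trace.

Variables (R : realType) (d : N -> R).
Hypothesis d_ge0 : forall a, is_bas (typ T a) -> (0 <= d a)%R.

Local Open Scope ereal_scope.
Local Notation dN := (fun a : N => (d a)%:E).
Local Notation dS := (fun s : sN => (d (val s))%:E).
Local Notation dQ := (quotdur T v d).

Lemma quotdur_ge0 x : is_bas (typ Tq x) -> 0 <= dQ x.
Proof.
rewrite /quotdur is_bas_quot; case: eqP => _ /= xB; last by rewrite lee_fin d_ge0.
by apply: min_time_ge0 => s sB; rewrite lee_fin d_ge0.
Qed.

Lemma attacked_quotdur_ge0 O' : is_attack Tq O' -> forall x, x \in O'.1 -> 0 <= dQ x.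
Proof. by move=> HO' x /(attacked_bas HO') /quotdur_ge0. Qed.

Lemma sum_quotdur_vt (E : {set qN}) : vt \in E ->
  \sum_(x in E :&: [set vt]) dQ x = min_time Tv dS.
Proof. by move=> vE; rewrite (setIidPr _) ?sub1set // big_set1 /quotdur /= eqxx. Qed.

Lemma sum_quotdur_out (E : {set qN}) :
  \sum_(x in E :\ vt) dQ x = \sum_(x in E :\ vt) dN (val x).
Proof. by apply: eq_bigr => x /setD1P[xv _]; rewrite /quotdur (negbTE (xv : val x != v)). Qed.

Section Collapse.
Variable O : attack N.
Hypothesis HO : is_attack T O.

(* Each node of T^v stands for a block of attacked BASes of T, ṽ for the trace of O on B_v;
   two nodes are ordered when all elements of their blocks are. *)
Definition collapse_block (x : qN) : {set N} :=
  if val x == v then O.1 :&: Bset T v else [set val x].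

Definition collapse_attacked : {set qN} :=
  [set x | if val x == v then reaches T O v else val x \in O.1].

Definition collapse : attack qN :=
  (collapse_attacked,
   [set p | [&& p.1 \in collapse_attacked, p.2 \in collapse_attacked &
     [forall a in collapse_block p.1, forall b in collapse_block p.2, (a, b) \in O.2]]]).

Lemma collapse_precE x y : ((x, y) \in collapse.2) =
  [&& x \in collapse.1, y \in collapse.1 &
      [forall a in collapse_block x, forall b in collapse_block y, (a, b) \in O.2]].
Proof. by rewrite inE. Qed.

Lemma collapse_block_attacked x : x \in collapse.1 -> collapse_block x \subset O.1.
Proof. by rewrite /collapse_block inE; case: ifP => _ xO; rewrite ?subsetIl ?sub1set. Qed.

Lemma collapse_block_neq0 x : x \in collapse.1 -> collapse_block x != set0.
Proof.
rewrite /collapse_block inE; case: ifP => _.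
  case/(reachf_attacked_bas (wf_leaf wfT)) => a aO aB.
  by apply/set0Pn; exists a; rewrite inE aO aB.
by move=> _; apply/set0Pn; exists (val x); rewrite set11.
Qed.

Lemma collapse_precP x y a b : (x, y) \in collapse.2 ->
  a \in collapse_block x -> b \in collapse_block y -> (a, b) \in O.2.
Proof. by rewrite collapse_precE => /and3P[_ _ /forall_inP xy] /xy /forall_inP; apply. Qed.

Lemma collapse_attack : is_attack Tq collapse.
Proof.
apply/and4P; split.
- apply/subsetP=> x; rewrite !inE is_bas_quot; case: eqP => //= _.
  by move/(attacked_bas HO).
- by apply/forallP=> -[x y]; apply/implyP; rewrite collapse_precE => /and3P[-> ->].
- apply/forallP=> x; apply/negP=> xx.
  have /set0Pn[a ax] : collapse_block x != set0.
    by apply: collapse_block_neq0; move: xx; rewrite collapse_precE => /and3P[].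
  by move: (collapse_precP xx ax ax); rewrite (negbTE (prec_irrefl HO a)).
- apply/forallP=> x; apply/forallP=> y; apply/forallP=> z; apply/implyP=> /andP[xy yz].
  move: (xy) (yz); rewrite !collapse_precE => /and3P[xA yA _] /and3P[_ zA _].
  rewrite xA zA; apply/forall_inP=> a ax; apply/forall_inP=> c zc.
  have /set0Pn[b yb] := collapse_block_neq0 yA.
  exact: (prec_trans HO (collapse_precP xy ax yb) (collapse_precP yz yb zc)).
Qed.

Lemma collapse_block_Bset (x a : qN) :
  a \in Bset Tq x -> collapse_block a \subset Bset T (val x).
Proof.
rewrite Bset_quotE /collapse_block => /andP[dxa]; case: eqP => [av _|_ /= aB].
  by rewrite av in dxa; apply: subset_trans (subsetIr _ _) (Bset_desc_sub dxa).
by rewrite sub1set inE dxa.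
Qed.

Lemma sand_rel_collapse x y : sand_rel T O (val x) (val y) -> sand_rel Tq collapse x y.
Proof.
move/forallP=> sxy; apply/forallP=> a; apply/forallP=> b; apply/implyP.
case/and4P=> aA ax bA yb; rewrite collapse_precE aA bA; apply/forall_inP=> a0 a0a.
apply/forall_inP=> b0 b0b; move: (sxy a0) => /forallP/(_ b0)/implyP; apply.
rewrite (subsetP (collapse_block_attacked aA) _ a0a).
rewrite (subsetP (collapse_block_attacked bA) _ b0b).
by rewrite (subsetP (collapse_block_Bset ax) _ a0a) (subsetP (collapse_block_Bset yb) _ b0b).
Qed.

Lemma reachf_collapse k (u : qN) : reachf T O k (val u) -> reaches Tq collapse u.
Proof.
elim: k u => // k IH u.
have [uv|uv] := eqVneq (val u) v.
  move/(reachf_reaches acyclicT); rewrite uv => rv.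
  by rewrite (reachesE acyclic_quot) /reach_step /= uv eqxx /= inE uv eqxx.
rewrite reachfS (reachesE acyclic_quot) /reach_step (typ_quot uv) -(ch_quot uv).
case: (typ T (val u)).
- by rewrite inE (negbTE uv).
- by rewrite has_map => /hasP[c cu /IH rc]; apply/hasP; exists c.
- by rewrite all_map => /allP ru; apply/allP=> c /ru /IH.
- rewrite all_map sorted_map => /andP[/allP ru su]; apply/andP; split.
    by apply/allP=> c /ru /IH.
  by apply: sub_sorted su => x y; apply: sand_rel_collapse.
Qed.

Definition restrict : attack sN :=
  ([set s : sN | val s \in O.1], [set p : sN * sN | (val p.1, val p.2) \in O.2]).

Lemma restrict_attack : is_attack Tv restrict.
Proof.
apply/and4P; split.
- by apply/subsetP=> s; rewrite !inE => /(attacked_bas HO).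
- by apply/forallP=> p; apply/implyP; rewrite !inE => /(prec_attacked HO).
- by apply/forallP=> s; rewrite inE /= (prec_irrefl HO).
- apply/forallP=> x; apply/forallP=> y; apply/forallP=> z; apply/implyP.
  by rewrite !inE /= => /andP[]; apply: (prec_trans HO).
Qed.

Lemma restrict_successful : reaches T O v -> successful Tv restrict.
Proof.
move=> rv; rewrite /successful restrict_attack (@reaches_sub O restrict) //.
  by move=> s; rewrite inE.
by move=> s t; rewrite inE.
Qed.

Lemma chain_uncollapse C' D :
  is_chain collapse C' -> is_chain restrict D -> (D != set0 -> vt \in C') ->
  is_chain O (val @: D :|: val @: (C' :\ vt)).
Proof.
case/is_chainP=> C'A C'cmp /is_chainP[DA Dcmp] Dvt.
have DO s : s \in D -> val s \in O.1 by move/DA; rewrite inE.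
have in_block a : a \in val @: D :|: val @: (C' :\ vt) ->
    quot_of a \in C' /\ a \in collapse_block (quot_of a).
  case/setUP=> /imsetP[x xD ->].
    rewrite (quot_of_desc (valP x)); split; first by apply: Dvt; apply/set0Pn; exists x.
    by rewrite /collapse_block /= eqxx inE DO // inE (valP x) (attacked_bas HO (DO x xD)).
  case/setD1P: xD => xv xC'; rewrite /quot_of valKd.
  by rewrite /collapse_block (negbTE (xv : val x != v)) inE.
have in_D a : a \in val @: D :|: val @: (C' :\ vt) -> desc T v a ->
    exists2 s, s \in D & a = val s.
  case/setUP=> /imsetP[x xD ->] dx; first by exists x.
  by case/setD1P: xD => xv _; move: dx; rewrite (negbTE (kept_ndesc xv)).
apply/is_chainP; split=> [a /in_block[xC' ab]|a b aC bC ab].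
  exact: subsetP (collapse_block_attacked (C'A _ xC')) a ab.
have [[aC' ab'] [bC' bb']] := (in_block a aC, in_block b bC).
have [eab|neab] := eqVneq (quot_of a) (quot_of b).
  case/andP: (quot_of_eq ab eab) => /(in_D a aC)[s sD eas] /(in_D b bC)[t tD ebt].
  subst a b; have st : s != t by apply: contra_neq ab => ->.
  by move: (Dcmp s t sD tD st); rewrite !inE.
case/orP: (C'cmp _ _ aC' bC' neab) => [xy|yx].
  by rewrite (collapse_precP xy ab' bb').
by rewrite (collapse_precP yx bb' ab') orbT.
Qed.

Lemma collapse_time : attack_time collapse dQ <= attack_time O dN.
Proof.
have dN_ge0 a : a \in O.1 -> 0 <= dN a by move/(attacked_bas HO)/d_ge0; rewrite lee_fin.
apply: attack_time_le => C' /andP[chC' _].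
have [D chD [Dvt vt_le]] : exists2 D : {set sN}, is_chain restrict D &
    (D != set0 -> vt \in C') /\ \sum_(x in C' :&: [set vt]) dQ x <= \sum_(s in D) dS s.
  have [vC'|vC'] := boolP (vt \in C'); last first.
    exists set0; first exact: chain0.
    rewrite eqxx big_set0; split=> //.
    by rewrite disjoint_setI0 ?big_set0 // disjoint_sym disjoints1.
  have rv : reaches T O v by case/is_chainP: chC' => /(_ vt vC'); rewrite inE /= eqxx.
  have dS_ge0 s : s \in restrict.1 -> 0 <= dS s by rewrite inE; apply: dN_ge0.
  have [D /andP[chD _] tD] := attack_time_attained dS_ge0.
  exists D => //; split=> [//|]; rewrite sum_quotdur_vt // -tD.
  exact: min_time_le (restrict_successful rv).
apply: le_trans (chain_le_attack_time dN_ge0 (chain_uncollapse chC' chD Dvt)).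
rewrite (big_setID [set vt]) big_module_split sum_quotdur_out.
by apply: leeD.
Qed.

End Collapse.

Lemma min_time_quot_le : min_time Tq dQ <= min_time T dN.
Proof.
apply: le_min_time => O /andP[HO rO].
have sO : successful Tq (collapse O).
  rewrite /successful collapse_attack //=; apply: (@reachf_collapse _ #|N|).
  by rewrite val_root_quot.
exact: le_trans (min_time_le _ sO) (collapse_time HO).
Qed.

Section Expand.
Variables (O' : attack qN) (P : attack sN).
Hypotheses (HO' : is_attack Tq O') (HP : is_attack Tv P).
Hypothesis P_empty : vt \notin O'.1 -> P.1 = set0.

Definition expand_attacked : {set N} :=
  [set a | if desc T v a then sub_of a \in P.1 else quot_of a \in O'.1].

Definition expand : attack N :=
  (expand_attacked,
   [set p | [&& p.1 \in expand_attacked, p.2 \in expand_attacked &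
     if desc T v p.1 && desc T v p.2 then (sub_of p.1, sub_of p.2) \in P.2
     else (quot_of p.1, quot_of p.2) \in O'.2]]).

Lemma expand_precE a b : ((a, b) \in expand.2) =
  [&& a \in expand.1, b \in expand.1 &
      if desc T v a && desc T v b then (sub_of a, sub_of b) \in P.2
      else (quot_of a, quot_of b) \in O'.2].
Proof. by rewrite inE. Qed.

Lemma expand_attacked_quot a : a \in expand.1 -> quot_of a \in O'.1.
Proof.
rewrite inE; case: (boolP (desc T v a)) => // dva aP; rewrite (quot_of_desc dva).
by apply: contraTT aP => /P_empty ->; rewrite inE.
Qed.

Lemma expand_prec_quot a b : (a, b) \in expand.2 -> ~~ (desc T v a && desc T v b) ->
  (quot_of a, quot_of b) \in O'.2.
Proof. by rewrite expand_precE => /and3P[_ _] + /negbTE nd; rewrite nd. Qed.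

Lemma expand_prec_trans a b c :
  (a, b) \in expand.2 -> (b, c) \in expand.2 -> (a, c) \in expand.2.
Proof.
rewrite !expand_precE => /and3P[aE _ ab] /and3P[_ cE bc]; rewrite aE cE /=.
move: ab bc; case dva: (desc T v a); case dvb: (desc T v b); case dvc: (desc T v c) => /= ab bc.
- exact: (prec_trans HP ab bc).
- by rewrite (quot_of_desc dva) -(quot_of_desc dvb).
- by move: (prec_trans HO' ab bc); rewrite !quot_of_desc // (negbTE (prec_irrefl HO' _)).
- exact: (prec_trans HO' ab bc).
- by rewrite (quot_of_desc dvc) -(quot_of_desc dvb).
- exact: (prec_trans HO' ab bc).
- exact: (prec_trans HO' ab bc).
- exact: (prec_trans HO' ab bc).
Qed.

Lemma expand_attack : is_attack T expand.
Proof.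
apply/and4P; split.
- apply/subsetP=> a; rewrite !inE; case: (boolP (desc T v a)) => dva.
    by move/(attacked_bas HP); rewrite /= val_sub_of.
  have av : val (quot_of a) != v by move: (quot_of_neq dva); rewrite -val_eqE.
  by move/(attacked_bas HO'); rewrite typ_quot // val_quot_of.
- by apply/forallP=> -[a b]; apply/implyP; rewrite expand_precE => /and3P[-> ->].
- apply/forallP=> a; rewrite expand_precE andbb; case: ifP => _.
    by rewrite (negbTE (prec_irrefl HP _)) !andbF.
  by rewrite (negbTE (prec_irrefl HO' _)) !andbF.
- apply/forallP=> a; apply/forallP=> b; apply/forallP=> c; apply/implyP=> /andP[].
  exact: expand_prec_trans.
Qed.

Lemma expand_attacked_sub s : (s \in P.1) = (val s \in expand.1).
Proof. by rewrite inE (valP s) /sub_of valKd. Qed.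

Lemma expand_prec_sub s t : ((s, t) \in P.2) = ((val s, val t) \in expand.2).
Proof.
rewrite expand_precE (valP s) (valP t) /sub_of !valKd /= -!expand_attacked_sub.
by apply/idP/and3P=> [st|[]//]; split=> //; case/andP: (prec_attacked HP st).
Qed.

Lemma quot_of_Bset (x : qN) a : a \in Bset T (val x) -> quot_of a \in Bset Tq x.
Proof.
rewrite inE Bset_quotE => /andP[dxa aB].
have [dva|dva] := boolP (desc T v a); last by rewrite val_quot_of // dxa aB orbT.
by rewrite quot_of_desc //= eqxx andbT (desc_module_entry (valP x) dxa dva).
Qed.

Lemma sand_rel_expand x y : sand_rel Tq O' x y -> sand_rel T expand (val x) (val y).
Proof.
move/forallP=> sxy; apply/forallP=> a; apply/forallP=> b; apply/implyP.
case/and4P=> aE ax bE yb.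
have qab : (quot_of a, quot_of b) \in O'.2.
  move: (sxy (quot_of a)) => /forallP/(_ (quot_of b))/implyP; apply.
  by rewrite (expand_attacked_quot aE) (expand_attacked_quot bE) !quot_of_Bset.
rewrite expand_precE aE bE /=; case: ifP => // /andP[dva dvb].
by move: qab; rewrite !quot_of_desc // (negbTE (prec_irrefl HO' vt)).
Qed.

Hypothesis P_successful : vt \in O'.1 -> successful Tv P.

Lemma reachf_expand k (u : qN) : reachf Tq O' k u -> reaches T expand (val u).
Proof.
elim: k u => // k IH u.
have [uv|uv] := eqVneq (val u) v.
  have -> : u = vt by apply: val_inj.
  rewrite reachfS /reach_step /= eqxx /= => /P_successful /andP[_].
  by rewrite (reaches_sub expand_attacked_sub expand_prec_sub).
rewrite reachfS (reachesE acyclicT) /reach_step (typ_quot uv) -(ch_quot uv).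
case: (typ T (val u)).
- by rewrite inE (negbTE (kept_ndesc uv)) /quot_of valKd.
- by rewrite has_map => /hasP[c cu /IH rc]; apply/hasP; exists c.
- by rewrite all_map => /allP ru; apply/allP=> c /ru /IH.
- rewrite all_map sorted_map => /andP[/allP ru su]; apply/andP; split.
    by apply/allP=> c /ru /IH.
  by apply: sub_sorted su => x y; apply: sand_rel_expand.
Qed.

Lemma chain_expand_sub C : is_chain expand C -> is_chain P [set s : sN | val s \in C].
Proof.
case/is_chainP=> CE Ccmp; apply/is_chainP; split=> [s|s t]; rewrite !inE.
  by move/CE; rewrite -expand_attacked_sub.
by move=> sC tC st; rewrite !expand_prec_sub; apply: Ccmp; rewrite ?val_eqE.
Qed.

Lemma chain_expand_quot C : is_chain expand C -> is_chain O' (quot_of @: C).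
Proof.
case/is_chainP=> CE Ccmp; apply/is_chainP; split.
  by move=> _ /imsetP[a aC ->]; apply/expand_attacked_quot/CE.
move=> _ _ /imsetP[a aC ->] /imsetP[b bC ->] qab.
have ab : a != b by apply: contraNneq qab => ->.
have nd : ~~ (desc T v a && desc T v b).
  by apply/negP=> /andP[dva dvb]; move: qab; rewrite !quot_of_desc // eqxx.
case/orP: (Ccmp a b aC bC ab) => [abE|baE]; first by rewrite (expand_prec_quot abE nd).
by rewrite (expand_prec_quot baE _) ?orbT // andbC.
Qed.

Hypothesis P_time : vt \in O'.1 -> attack_time P dS <= min_time Tv dS.

Lemma expand_time : attack_time expand dN <= attack_time O' dQ.
Proof.
have dS_ge0 s : s \in P.1 -> 0 <= dS s by move/(attacked_bas HP)/d_ge0; rewrite lee_fin.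
have dQ_ge0 := attacked_quotdur_ge0 HO'.
apply: attack_time_le => C /andP[chC _].
have chE := chain_expand_quot chC; have /is_chainP[E_att _] := chE.
apply: le_trans (chain_le_attack_time dQ_ge0 chE).
rewrite {1}(setU_module C) big_module_split [X in _ <= X](big_setID [set vt]).
rewrite sum_quotdur_out.
apply: leeD => //.
have [->|[s sC]] := set_0Vmem [set s : sN | val s \in C].
  by rewrite big_set0 sume_ge0 // => x /setIP[/E_att /dQ_ge0].
have vE : vt \in quot_of @: C.
  by rewrite inE in sC; rewrite -(quot_of_desc (valP s)) imset_f.
rewrite sum_quotdur_vt //; apply: le_trans (P_time (E_att _ vE)).
exact: (chain_le_attack_time dS_ge0 (chain_expand_sub chC)).
Qed.

End Expand.

Lemma exists_sub_attack (b : bool) : (b -> min_time Tv dS != +oo) ->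
  exists P : attack sN, [/\ is_attack Tv P, b -> successful Tv P,
    ~~ b -> P.1 = set0 & b -> attack_time P dS <= min_time Tv dS].
Proof.
case: b => [/(_ isT)/min_time_attained[P sP ->]|_].
  by exists P; split=> //; case/andP: sP.
by exists (set0, set0); split=> //; apply: is_attack0.
Qed.

Lemma min_time_le_quot : min_time T dN <= min_time Tq dQ.
Proof.
apply: le_min_time => O' /andP[HO' rO'].
have [/andP[vO' /eqP mS]|fin] := boolP ((vt \in O'.1) && (min_time Tv dS == +oo)).
  have := chain_le_attack_time (attacked_quotdur_ge0 HO') (chain1 vO').
  by rewrite big_set1 /quotdur /= eqxx mS leye_eq => /eqP ->; rewrite leey.
have [|P [HP P_succ P_empty P_time]] := exists_sub_attack (b := vt \in O'.1).
  by move=> vO'; move: fin; rewrite vO'.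
have sE : successful T (expand O' P).
  rewrite /successful expand_attack //= -val_root_quot.
  exact: (reachf_expand HO' HP P_empty P_succ rO').
exact: le_trans (min_time_le _ sE) (expand_time HO' HP P_empty P_time).
Qed.

End Module.

Unset Implicit Arguments. Set Strict Implicit. Set Printing Implicit Defensive.

Theorem mainTheorem9 (R : realType) (N : finType) (T : dat N) (d : N -> R) (v : N) :
  wf_dat T ->
  (forall a, is_bas (typ T a) -> (0 <= d a)%R) ->
  is_module T v ->
  min_time T (fun a => (d a)%:E) = min_time (quotdat T v) (quotdur T v d).
Proof.
move=> wfT d_ge0 modv; apply/le_anti/andP; split.
- exact: (min_time_le_quot wfT modv d_ge0).
- exact: (min_time_quot_le wfT modv d_ge0).
Qed.
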